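(* Let $n\ge1$ and let $A\subseteq\mathbb{F}_3^n$ be such that there are no $a,b,c\in A$ with $b\neq c$ and $a+b+c=0$. Then for every integer $d\ge0$, $$|A|\le 2\,|M(n,\lfloor d/2\rfloor)|+3^n-|M(n,d)|.$$
   Context: $\mathbb{F}_3$ is the field of integers modulo $3$. For integers $n\ge1$ and $e\ge 0$, $M(n,e)$ denotes the set of monomials $x_1^{\alpha_1}\cdots x_n^{\alpha_n}$ with $0\le\alpha_i\le2$ for all $i$ and $\alpha_1+\dots+\alpha_n\le e$; thus $|M(n,e)|=\sum_{i=0}^{e}\binom{n}{i}_2$, where $\binom{n}{i}_2$ is the coefficient of $x^i$ in $(1+x+x^2)^n$. *)

From HB Require Import structures.
From mathcomp Require Import all_boot all_order all_algebra.
Set Implicit Arguments. Unset Strict Implicit. Unset Printing Implicit Defensive.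
Import GRing.Theory.

(* M(n,e): exponent vectors alpha : 'I_n -> {0,1,2} with total degree <= e.
   A monomial x_1^{a_1}...x_n^{a_n} is identified with its exponent vector. *)
Definition monomials (n e : nat) : {set {ffun 'I_n -> 'I_3}} :=
  [set alpha : {ffun 'I_n -> 'I_3} | (\sum_(i < n) nat_of_ord (alpha i) <= e)%N].

(* Polynomial method (Croot-Lev-Pach, Ellenberg-Gijswijt).  Let V be the space
   of functions F_3^n -> F_3 given by reduced polynomials of degree <= d, of
   dimension |M(n,d)|, and Z the space of functions supported on A, of
   dimension |A|; inside the 3^n-dimensional space of all functions,
   dim (V :&: Z) >= |A| - (3^n - |M(n,d)|).  A space of dimension r contains a
   vector equal to 1 at r coordinates; let f in V :&: Z be one, S its 1-set.
   The matrix (f (-(x + y)))_(x,y in S) is the identity: -(x + x) = x, and for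
   x <> y in A the point -(x + y) is not in A.  But expanding f (-(x + y)) into
   monomials in x and y, each term has x-degree or y-degree <= d/2, so the
   whole matrix has rank <= 2 |M(n, d/2)|. *)

From HB Require Import structures.
From mathcomp Require Import all_boot all_order all_algebra.
From mathcomp Require Import ring zify.
Set Implicit Arguments. Unset Strict Implicit. Unset Printing Implicit Defensive.
Import GRing.Theory.
Open Scope ring_scope.

Section RankBounds.
Variable F : fieldType.

Lemma mxrank_sum_mul_le (I : finType) (P : pred I) m n
    (u : I -> 'cV[F]_m) (w : I -> 'rV[F]_n) :
  (\rank (\sum_(i | P i) u i *m w i)%R <= #|P|)%N.
Proof.
rewrite -sum1_card; apply: (big_ind2 (fun (M : 'M_(m, n)) k => \rank M <= k)%N).
- by rewrite mxrank0.
- by move=> M1 k1 M2 k2 h1 h2; exact: leq_trans (mxrank_add M1 M2) (leq_add h1 h2).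
- by move=> i _; exact: leq_trans (mxrankM_maxr _ _) (rank_leq_row _).
Qed.

Lemma mxrank_sum_genmx_le (I : finType) (P : pred I) n (v : I -> 'rV[F]_n) :
  (\rank (\sum_(i | P i) <<v i>>)%MS <= #|P|)%N.
Proof.
rewrite -sum1_card; apply: (big_ind2 (fun (M : 'M_n) k => \rank M <= k)%N).
- by rewrite mxrank0.
- move=> M1 k1 M2 k2 h1 h2.
  exact: leq_trans (mxrank_adds_leqif M1 M2) (leq_add h1 h2).
- by move=> i _; rewrite genmxE rank_leq_row.
Qed.

Lemma mxrank_mxsub_le m n p q (f : 'I_p -> 'I_m) (g : 'I_q -> 'I_n) (A : 'M[F]_(m, n)) :
  (\rank (mxsub f g A) <= \rank A)%N.
Proof.
rewrite mxsubrc; apply: leq_trans (mxrankS (rowsub_sub _ _)) _.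
by rewrite -{1}[A]mulmx1 -mulmx_colsub; exact: mxrankM_maxl.
Qed.

(* Invert a full-rank square submatrix of a row basis of W: the resulting
   combination of basis rows is 1 on the selected columns. *)
Lemma exists_row_ones_submx m n (W : 'M[F]_(m, n)) :
  exists v : 'rV[F]_n, exists g : 'I_(\rank W) -> 'I_n,
    [/\ (v <= W)%MS, injective g & forall i, v 0 (g i) = 1].
Proof.
set B := row_base W.
have fullBT : row_full B^T by rewrite /row_full mxrank_tr; exact: row_base_free.
pose g := fullrankfun fullBT.
have unitBg : colsub g B \in unitmx.
  by rewrite -[colsub g B]trmxK trmx_mxsub unitmx_tr fullrowsub_unit.
exists (const_mx 1 *m invmx (colsub g B) *m B), g; split.
- by apply: submx_trans (submxMl _ _) _; rewrite eq_row_base.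
- exact: fullrankfun_inj.
- move=> i; have : colsub g (const_mx 1 *m invmx (colsub g B) *m B)
                    = const_mx 1 :> 'rV_(\rank W).
    by rewrite -mulmx_colsub -mulmxA mulVmx ?mulmx1.
  by move/rowP/(_ i); rewrite !mxE.
Qed.

End RankBounds.

Lemma natr_eq_row_prod (R : comPzSemiRingType) (T : eqType) n (x y : 'rV[T]_n) :
  ((x == y)%:R : R) = \prod_i (x 0 i == y 0 i)%:R.
Proof.
have [->|neq_xy] := eqVneq x y; first by rewrite big1 // => i _; rewrite eqxx.
have [i neq_i] : exists i, x 0 i != y 0 i.
  apply/existsP; apply: contraR neq_xy; rewrite negb_exists => /forallP eq_xy.
  by apply/eqP/rowP => i; apply/eqP/negbNE/eq_xy.
by rewrite (bigD1 i) //= (negPf neq_i) mul0r.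
Qed.

Lemma F3_sqr (z : 'F_3) : z != 0 -> z ^+ 2 = 1.
Proof. by case: z => [[|[|[|k]]] ?] // _; apply/eqP. Qed.

Lemma F3_opp_double (z : 'F_3) : - (z + z) = z.
Proof. by case: z => [[|[|[|k]]] ?]; apply/eqP. Qed.

Lemma F3_mx_opp_double m p (x : 'M['F_3]_(m, p)) : - (x + x) = x.
Proof. by apply/matrixP => i j; rewrite !mxE F3_opp_double. Qed.

(* Coefficients of [1 - (a - b)^2], which is the indicator of [a = b] in F_3. *)
Definition eq_coef (b : 'F_3) (e : 'I_3) : 'F_3 :=
  if e == 0 :> nat then 1 - b ^+ 2 else if e == 1 :> nat then b *+ 2 else -1.

Lemma natr_eq_F3E (a b : 'F_3) : (a == b)%:R = \sum_(e < 3) eq_coef b e * a ^+ e.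
Proof.
have -> : (a == b)%:R = 1 - (a - b) ^+ 2 :> 'F_3.
  have [->|neq_ab] := eqVneq a b; first by rewrite subrr expr0n subr0.
  by rewrite F3_sqr ?subr_eq0 // subrr.
by rewrite !big_ord_recl big_ord0 /eq_coef /=; ring.
Qed.

Definition oppD_coef (e s t : 'I_3) : 'F_3 :=
  if (s + t == e)%N then (-1) ^+ e * 'C(e, s)%:R else 0.

Lemma exp_oppD_F3 (e : 'I_3) (a b : 'F_3) :
  (- (a + b)) ^+ e = \sum_(s < 3) \sum_(t < 3) oppD_coef e s t * a ^+ s * b ^+ t.
Proof.
rewrite /oppD_coef; case: e => [[|[|[|k]]] ?] //=;
  by rewrite !big_ord_recl !big_ord0 /= /bump /= ?bin0 ?bin1 ?binn; ring.
Qed.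

Section Monomials.
Variable n : nat.
Local Notation K := {ffun 'I_n -> 'I_3}.
Local Notation X := 'rV['F_3]_n.
Local Notation N := #|{: X}|.

Definition mono (al : K) (x : X) : 'F_3 := \prod_i x 0 i ^+ al i.

Definition deg (al : K) : nat := \sum_(i < n) nat_of_ord (al i).

Lemma in_monomials d al : (al \in monomials n d) = (deg al <= d)%N.
Proof. by rewrite inE. Qed.

Lemma natr_eq_monoE (x y : X) :
  (x == y)%:R = \sum_(al : K) (\prod_i eq_coef (y 0 i) (al i)) * mono al x.
Proof.
rewrite natr_eq_row_prod; under eq_bigr do rewrite natr_eq_F3E.
by rewrite bigA_distr_bigA; apply: eq_bigr => al _; rewrite -big_split.
Qed.

Lemma mono_oppD (al : K) (a b : X) :
  mono al (- (a + b)) = \sum_(S : K) \sum_(T : K)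
     (\prod_i oppD_coef (al i) (S i) (T i)) * mono S a * mono T b.
Proof.
rewrite /mono; under eq_bigr do rewrite !mxE exp_oppD_F3.
rewrite bigA_distr_bigA; apply: eq_bigr => S _.
by rewrite bigA_distr_bigA; apply: eq_bigr => T _; rewrite -!big_split.
Qed.

Lemma card_points : N = (3 ^ n)%N.
Proof. by rewrite card_mx card_Fp // mul1n. Qed.

Lemma card_exponents : #|{: K}| = (3 ^ n)%N.
Proof. by rewrite card_ffun !card_ord. Qed.

(* Functions [X -> F_3] are encoded as row vectors indexed by [enum X]. *)
Definition mono_row (al : K) : 'rV['F_3]_N := \row_j mono al (enum_val j).

Definition polyfuns d : 'M['F_3]_N := (\sum_(al in monomials n d) <<mono_row al>>)%MS.

Definition funs_on (A : {set X}) : 'M['F_3]_N :=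
  diag_mx (\row_j (enum_val j \in A)%:R).

Definition poly_eval d (c : K -> 'F_3) (x : X) : 'F_3 :=
  \sum_(al in monomials n d) c al * mono al x.

Lemma polyfunsP d (v : 'rV_N) :
  (v <= polyfuns d)%MS -> exists c, forall x, v 0 (enum_rank x) = poly_eval d c x.
Proof.
case/sub_sums_genmxP=> u ->; exists (fun al => u al 0 0) => x.
by rewrite summxE; apply: eq_bigr => al _; rewrite !mxE big_ord1 mxE enum_rankK.
Qed.

Lemma funs_onP (A : {set X}) (v : 'rV_N) j :
  (v <= funs_on A)%MS -> enum_val j \notin A -> v 0 j = 0.
Proof. by case/submxP=> w -> notAj; rewrite mul_mx_diag !mxE (negPf notAj) mulr0. Qed.

Lemma mono_rows_full : (1%:M <= \sum_(al : K) <<mono_row al>>)%MS.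
Proof.
apply/row_subP => j; rewrite row1; apply/sub_sums_genmxP.
exists (fun al : K => (\prod_i eq_coef (enum_val j 0 i) (al i))%:M).
apply/rowP => k; rewrite !mxE summxE eqxx -(inj_eq enum_val_inj) natr_eq_monoE.
by apply: eq_bigr => al _; rewrite mul_scalar_mx !mxE.
Qed.

Lemma card_monomials_le_rank d : (#|monomials n d| <= \rank (polyfuns d))%N.
Proof.
have rank_rest : (\rank (\sum_(al | al \notin monomials n d) <<mono_row al>>)%MS
                  <= 3 ^ n - #|monomials n d|)%N.
  apply: leq_trans (mxrank_sum_genmx_le _ _) _.
  rewrite -card_exponents -(cardsC (monomials n d)) addKn.
  by apply/eq_leq/eq_card => al; rewrite unfold_in !inE.
have := mxrankS mono_rows_full; rewrite mxrank1 (bigID (mem (monomials n d))) /=.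
move/leq_trans/(_ (mxrank_adds_leqif _ _)).
move/leq_trans/(_ (leq_add (leqnn _) rank_rest)).
have : (#|monomials n d| <= 3 ^ n)%N by rewrite -card_exponents max_card.
rewrite -/(polyfuns d) => le_M le_N.
by rewrite -(leq_add2r (3 ^ n - #|monomials n d|)) subnKC // {1}(esym card_points).
Qed.

Lemma card_le_rank_funs_on (A : {set X}) : (#|A| <= \rank (funs_on A))%N.
Proof.
pose h (i : 'I_#|A|) := enum_rank (enum_val i).
have -> : #|A| = \rank (mxsub h h (funs_on A)).
  suff -> : mxsub h h (funs_on A) = 1%:M by rewrite mxrank1.
  apply/matrixP => i i'; rewrite !mxE /h enum_rankK enum_valP.
  by rewrite (inj_eq enum_rank_inj) (inj_eq enum_val_inj).
exact: mxrank_mxsub_le.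
Qed.

Lemma card_le_rank_cap_polyfuns_funs_on d (A : {set X}) :
  (#|A| <= \rank (polyfuns d :&: funs_on A) + (3 ^ n - #|monomials n d|))%N.
Proof.
have := mxrank_sum_cap (polyfuns d) (funs_on A).
have := rank_leq_col (polyfuns d + funs_on A)%MS.
have := card_monomials_le_rank d; have := card_le_rank_funs_on A.
have := card_points; lia.
Qed.

Section SliceRank.
Variables (d : nat) (c : K -> 'F_3).

Definition oppD_mono_coef (S T : K) : 'F_3 :=
  \sum_(al in monomials n d) c al * \prod_i oppD_coef (al i) (S i) (T i).

Lemma oppD_mono_coef_eq0 S T : (d < deg S + deg T)%N -> oppD_mono_coef S T = 0.
Proof.
move=> lt_d; apply: big1 => al; rewrite in_monomials => le_al.
have [i neq_i | eq_al] := pickP (fun i => S i + T i != al i)%N.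
  by rewrite (bigD1 i) //= /oppD_coef (negPf neq_i) mul0r mulr0.
suff deg_al : deg al = (deg S + deg T)%N by rewrite deg_al leqNgt lt_d in le_al.
rewrite /deg -big_split; apply: eq_bigr => i _.
by move: (eq_al i) => /negbFE/eqP.
Qed.

Lemma poly_eval_oppD (a b : X) : poly_eval d c (- (a + b)) =
  \sum_(S : K) \sum_(T : K) oppD_mono_coef S T * mono S a * mono T b.
Proof.
transitivity (\sum_(al in monomials n d) \sum_(S : K) \sum_(T : K)
   c al * ((\prod_i oppD_coef (al i) (S i) (T i)) * mono S a * mono T b)).
  apply: eq_bigr => al _; rewrite mono_oppD mulr_sumr.
  by apply: eq_bigr => S _; rewrite mulr_sumr.
rewrite exchange_big; apply: eq_bigr => S _; rewrite exchange_big.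
apply: eq_bigr => T _; rewrite /oppD_mono_coef !mulr_suml.
by apply: eq_bigr => al _; ring.
Qed.

(* Each monomial [mono S a * mono T b] of [f (- (a + b))] has [deg S <= d/2]
   or [deg T <= d/2], so the matrix splits into two sums of rank-one terms. *)
Lemma mxrank_poly_eval_oppD_le :
  (\rank (\matrix_(j, k) poly_eval d c (- (enum_val j + enum_val k)) : 'M_N)
     <= 2 * #|monomials n d./2|)%N.
Proof.
set Mh := monomials n d./2.
pose col_mono S : 'cV_N := \col_j mono S (enum_val j).
have -> : \matrix_(j, k) poly_eval d c (- (enum_val j + enum_val k)) =
  \sum_(S in Mh) col_mono S *m
       (\row_k \sum_(T : K) oppD_mono_coef S T * mono T (enum_val k))
  + \sum_(T in Mh)
       (\col_j \sum_(S | S \notin Mh) oppD_mono_coef S T * mono S (enum_val j))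
       *m mono_row T.
  apply/matrixP => j k; rewrite !mxE poly_eval_oppD !summxE.
  rewrite (bigID (mem Mh)) /=; congr (_ + _).
    apply: eq_bigr => S _; rewrite !mxE big_ord1 !mxE mulr_sumr.
    by apply: eq_bigr => T _; ring.
  rewrite exchange_big /= (bigID (mem Mh)) /= [X in _ + X]big1 ?addr0.
    apply: eq_bigr => T _; rewrite !mxE big_ord1 !mxE mulr_suml.
    by apply: eq_bigr => S _; ring.
  move=> T; rewrite in_monomials -ltnNge => lt_T; apply: big1 => S.
  rewrite in_monomials -ltnNge => lt_S.
  rewrite oppD_mono_coef_eq0 ?mul0r ?mulr0 //.
  by move: lt_S lt_T; have := odd_double_half d; have := leq_b1 (odd d); lia.
apply: leq_trans (mxrank_add _ _) _.
by rewrite mul2n -addnn leq_add // mxrank_sum_mul_le.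
Qed.

End SliceRank.

Definition oppD_mx (v : 'rV['F_3]_N) : 'M['F_3]_N :=
  \matrix_(j, k) v 0 (enum_rank (- (enum_val j + enum_val k))).

Lemma mxrank_oppD_mx_le d v :
  (v <= polyfuns d)%MS -> (\rank (oppD_mx v) <= 2 * #|monomials n d./2|)%N.
Proof.
case/polyfunsP=> c eval_v; have -> : oppD_mx v =
    \matrix_(j, k) poly_eval d c (- (enum_val j + enum_val k)).
  by apply/matrixP => j k; rewrite !mxE eval_v.
exact: mxrank_poly_eval_oppD_le.
Qed.

Lemma oppD_mx_sub_id (A : {set X}) (v : 'rV_N) m (g : 'I_m -> 'I_N) :
    (forall a b c : X, a \in A -> b \in A -> c \in A -> b != c -> a + b + c != 0) ->
    (v <= funs_on A)%MS -> injective g -> (forall i, v 0 (g i) = 1) ->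
  mxsub g g (oppD_mx v) = 1%:M.
Proof.
move=> capA v_A inj_g v_g.
have g_A i : enum_val (g i) \in A.
  by apply: contraT => /(funs_onP v_A); rewrite v_g => /eqP; rewrite oner_eq0.
apply/matrixP => i i'; rewrite !mxE.
have [<-|neq_ii'] := eqVneq i i'; first by rewrite F3_mx_opp_double enum_valK v_g.
rewrite (funs_onP v_A) //; apply/negP; rewrite enum_rankK => oppD_A.
have neq_g : enum_val (g i) != enum_val (g i').
  by apply: contra neq_ii' => /eqP/enum_val_inj/inj_g ->.
by have := capA _ _ _ oppD_A (g_A i) (g_A i') neq_g; rewrite -addrA addNr eqxx.
Qed.

End Monomials.
Arguments polyfuns {n} d.

Close Scope ring_scope.

Theorem mainTheorem5 (n : nat) (hn : (1 <= n)%N) (A : {set 'rV['F_3]_n})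
  (hA : forall a b c : 'rV['F_3]_n, a \in A -> b \in A -> c \in A ->
          b != c -> (a + b + c != 0)%R)
  (d : nat) :
  (#|A| <= 2 * #|monomials n d./2| + (3 ^ n - #|monomials n d|))%N.
Proof.
apply: leq_trans (card_le_rank_cap_polyfuns_funs_on d A) _; rewrite leq_add2r.
have [v [g [v_cap inj_g v_g]]] := exists_row_ones_submx (polyfuns d :&: funs_on A)%MS.
have v_poly : (v <= polyfuns d)%MS := submx_trans v_cap (capmxSl _ _).
have v_A : (v <= funs_on A)%MS := submx_trans v_cap (capmxSr _ _).
have := mxrank_mxsub_le g g (oppD_mx v).
rewrite (oppD_mx_sub_id hA v_A inj_g v_g) mxrank1 => /leq_trans; apply.
exact: mxrank_oppD_mx_le v_poly.
Qed.
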